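(* Let $P$ be an orthogonal polygon, let $p$ be a point in the interior of a pixel $\psi$ of $P$, and let $p'$ be any point of $\psi$ (possibly on the boundary of $\psi$). Then $G(p)\subseteq G(p')$. This holds under either of the two conventions (i), (ii) for $r$-guarding.
   Context: An orthogonal polygon $P$ is a closed connected region of the plane whose boundary consists of finitely many axis-parallel segments; it may have holes. The pixelation of $P$ is the partition of $P$ into rectangles obtained by shooting, from every reflex vertex of $P$, a horizontal and a vertical ray into the interior of $P$ until it hits the boundary of $P$; the resulting rectangles are called pixels. For points $g,p$, let $R(g,p)$ be the smallest closed axis-aligned rectangle containing $g$ and $p$. An axis-aligned rectangle $R\subseteq P$ is degenerate if it has area $0$ and there is no axis-aligned rectangle $R'$ of positive area with $R\subset R'\subseteq P$. Two conventions for $r$-guarding are considered: (i) $g$ $r$-guards $p$ iff $R(g,p)\subseteq P$; (ii) $g$ $r$-guards $p$ iff $R(g,p)\subseteq P$ and $R(g,p)$ is not degenerate. The guarding set $G(p)$ of a point $p\in P$ is the set of all points $g\in P$ that $r$-guard $p$. *)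

From Stdlib Require Import Reals List.
Open Scope R_scope.

Definition point := (R * R)%type.
Definition region := point -> Prop.

Definition near (eps : R) (x y : point) : Prop :=
  Rabs (fst y - fst x) < eps /\ Rabs (snd y - snd x) < eps.

Definition interior (S : region) (x : point) : Prop :=
  exists eps, 0 < eps /\ forall y, near eps x y -> S y.

Definition closure (S : region) (x : point) : Prop :=
  forall eps, 0 < eps -> exists y, S y /\ near eps x y.

Definition boundary (S : region) (x : point) : Prop :=
  closure S x /\ ~ interior S x.

Definition is_closed (S : region) : Prop := forall x, closure S x -> S x.

Definition is_open (S : region) : Prop := forall x, S x -> interior S x.

Definition bounded (S : region) : Prop :=
  exists M, forall x, S x -> Rabs (fst x) <= M /\ Rabs (snd x) <= M.

Definition connected (S : region) : Prop :=
  ~ exists U V : region,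
      is_open U /\ is_open V /\
      (forall x, S x -> U x \/ V x) /\
      (exists x, S x /\ U x) /\ (exists x, S x /\ V x) /\
      (forall x, S x -> U x -> V x -> False).

Record segment := Seg { sx1 : R; sy1 : R; sx2 : R; sy2 : R }.

Definition axis_parallel (s : segment) : Prop := sx1 s = sx2 s \/ sy1 s = sy2 s.

Definition on_segment (s : segment) (x : point) : Prop :=
  Rmin (sx1 s) (sx2 s) <= fst x <= Rmax (sx1 s) (sx2 s) /\
  Rmin (sy1 s) (sy2 s) <= snd x <= Rmax (sy1 s) (sy2 s).

Definition orthogonal_polygon (P : region) : Prop :=
  is_closed P /\ bounded P /\ connected P /\
  (exists x, interior P x) /\
  (forall x, P x -> closure (interior P) x) /\
  exists segs : list segment,
    (forall s, In s segs -> axis_parallel s) /\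
    (forall x, boundary P x <-> exists s, In s segs /\ on_segment s x).

Definition closed_rect (a b c d : R) (x : point) : Prop :=
  a <= fst x <= b /\ c <= snd x <= d.

Definition open_rect (a b c d : R) (x : point) : Prop :=
  a < fst x < b /\ c < snd x < d.

Definition sgn (b : bool) : R := if b then 1 else -1.

Definition quadrant (v : point) (eps : R) (sx sy : bool) (x : point) : Prop :=
  0 < sgn sx * (fst x - fst v) < eps /\ 0 < sgn sy * (snd x - snd v) < eps.

Definition reflex_vertex (P : region) (v : point) (sx sy : bool) : Prop :=
  exists eps, 0 < eps /\
    (forall x, quadrant v eps sx sy x -> ~ P x) /\
    (forall x, quadrant v eps (negb sx) sy x -> P x) /\
    (forall x, quadrant v eps sx (negb sy) x -> P x) /\
    (forall x, quadrant v eps (negb sx) (negb sy) x -> P x).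

Definition ray_cut (P : region) (v : point) (dx dy : R) (x : point) : Prop :=
  exists t, 0 <= t /\
    (forall s, 0 < s < t -> interior P (fst v + s * dx, snd v + s * dy)) /\
    x = (fst v + t * dx, snd v + t * dy).

(* For a reflex vertex with missing quadrant (sx, sy), the incident edges go in
   directions (sx,0) and (0,sy); the rays extend them into the interior, i.e.
   they go in directions (-sx,0) and (0,-sy). *)
Definition cuts (P : region) (x : point) : Prop :=
  exists v sx sy, reflex_vertex P v sx sy /\
    (ray_cut P v (- sgn sx) 0 x \/ ray_cut P v 0 (- sgn sy) x).

(* [a,b] x [c,d] is a pixel of P: a rectangle of positive area contained in P,
   whose interior meets no cut and whose boundary lies on the cuts or on the
   boundary of P (i.e. a face of the partition of P induced by the cuts). *)
Definition pixel (P : region) (a b c d : R) : Prop :=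
  a < b /\ c < d /\
  (forall x, closed_rect a b c d x -> P x) /\
  (forall x, open_rect a b c d x -> ~ cuts P x) /\
  (forall x, closed_rect a b c d x -> ~ open_rect a b c d x ->
             cuts P x \/ boundary P x).

Definition Rgp (g p : point) : region :=
  closed_rect (Rmin (fst g) (fst p)) (Rmax (fst g) (fst p))
              (Rmin (snd g) (snd p)) (Rmax (snd g) (snd p)).

Definition subset (A B : region) : Prop := forall x, A x -> B x.

Definition degenerate (P : region) (a b c d : R) : Prop :=
  (b - a) * (d - c) = 0 /\
  ~ exists a' b' c' d', a' < b' /\ c' < d' /\
      subset (closed_rect a b c d) (closed_rect a' b' c' d') /\
      (exists x, closed_rect a' b' c' d' x /\ ~ closed_rect a b c d x) /\
      subset (closed_rect a' b' c' d') P.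

Inductive convention := ConvI | ConvII.

Definition r_guards (cv : convention) (P : region) (g p : point) : Prop :=
  match cv with
  | ConvI => subset (Rgp g p) P
  | ConvII => subset (Rgp g p) P /\
      ~ degenerate P (Rmin (fst g) (fst p)) (Rmax (fst g) (fst p))
                     (Rmin (snd g) (snd p)) (Rmax (snd g) (snd p))
  end.

Definition guard_set (cv : convention) (P : region) (p : point) : region :=
  fun g => P g /\ r_guards cv P g p.

(* If g r-guards p then R(g,p) is contained in P.  Moving p to another point
   of the open pixel one coordinate at a time, R(g,p) only grows by the
   rectangle swept by one of its sides.  The part of that rectangle level with
   the pixel lies in the pixel; the rest could only leave P if the exterior of
   P clustered on a sweeping column, and then the cluster point nearest
   to the pixel would be a reflex vertex whose cut enters the open pixel.
   Points on the boundary of the pixel follow because P is closed.  For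
   convention (ii), R(g,p') lies in a positive-area rectangle R(g,q) inside P
   with q in the pixel, so it is not degenerate. *)

From Stdlib Require Import Reals Lra Classical List.
Import ListNotations.
Open Scope R_scope.

Lemma near_intro e x y : fst y - fst x < e -> fst x - fst y < e ->
  snd y - snd x < e -> snd x - snd y < e -> near e x y.
Proof. intros; split; apply Rabs_def1; lra. Qed.

Lemma near_elim e x y : near e x y -> fst y - fst x < e /\ fst x - fst y < e /\
  snd y - snd x < e /\ snd x - snd y < e.
Proof. intros [H1 H2]; apply Rabs_def2 in H1; apply Rabs_def2 in H2; lra. Qed.

Lemma near_refl e x : 0 < e -> near e x x.
Proof. intros; apply near_intro; lra. Qed.

Lemma Rmin_Rmax_between u v w :
  Rmin u v <= w <= Rmax u v <-> (u <= w <= v \/ v <= w <= u).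
Proof. unfold Rmin, Rmax; destruct (Rle_dec u v); split; intros; lra. Qed.

Lemma half_Rmin_bounds r1 r2 : 0 < r1 -> 0 < r2 ->
  0 < Rmin r1 r2 / 2 /\ Rmin r1 r2 / 2 <= r1 / 2 /\ Rmin r1 r2 / 2 <= r2 / 2.
Proof.
  intros. pose proof (Rmin_l r1 r2). pose proof (Rmin_r r1 r2).
  pose proof (Rmin_glb_lt r1 r2 0 H H0). lra.
Qed.

Lemma list_min_pos (l : list R) : (forall r, In r l -> 0 < r) ->
  exists e, 0 < e /\ forall r, In r l -> e <= r.
Proof.
  induction l as [|r l IH]; intros Hpos.
  - exists 1; split; [lra | intros r []].
  - destruct IH as [e [He Hl]]; [intros r' Hr'; apply Hpos; simpl; auto|].
    exists (Rmin e r); split.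
    + apply Rmin_glb_lt; auto. apply Hpos; simpl; auto.
    + intros r' [<-|Hin]; [apply Rmin_r|].
      eapply Rle_trans; [apply Rmin_l | auto].
Qed.

Lemma sup_approx (E : R -> Prop) (ub : R) :
  (forall t, E t -> t <= ub) -> (exists t, E t) ->
  exists m, (forall t, E t -> t <= m) /\ (forall u, (forall t, E t -> t <= u) -> m <= u) /\
    (forall eta, 0 < eta -> exists t, E t /\ m - eta < t).
Proof.
  intros Hub Hne. destruct (completeness E) as [m [Hm Hleast]].
  - exists ub; intros t Ht; auto.
  - exact Hne.
  - exists m; split; [exact Hm | split; [exact Hleast|]].
    intros eta Heta. apply NNPP; intro Hnone.
    assert (Hub' : is_upper_bound E (m - eta)).
    { intros t Et. apply Rnot_lt_le; intro Hlt. apply Hnone; exists t; auto. }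
    specialize (Hleast _ Hub'); lra.
Qed.

Lemma inf_approx (E : R -> Prop) (lb : R) :
  (forall t, E t -> lb <= t) -> (exists t, E t) ->
  exists m, (forall t, E t -> m <= t) /\ lb <= m /\
    (forall eta, 0 < eta -> exists t, E t /\ t < m + eta).
Proof.
  intros Hlb [t0 Ht0].
  destruct (sup_approx (fun u => E (- u)) (- lb)) as [m [Hm [Hleast Happ]]].
  - intros t Ht; specialize (Hlb _ Ht); lra.
  - exists (- t0); rewrite Ropp_involutive; auto.
  - exists (- m); split; [|split].
    + intros t Ht. enough (- t <= m) by lra. apply Hm; rewrite Ropp_involutive; auto.
    + enough (m <= - lb) by lra. apply Hleast; intros t Ht; specialize (Hlb _ Ht); lra.
    + intros eta Heta. destruct (Happ eta Heta) as [t [Ht Hlt]].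
      exists (- t); split; auto; lra.
Qed.

Lemma closed_compl_open P : is_closed P -> forall w, ~ P w ->
  exists r, 0 < r /\ forall u, near r w u -> ~ P u.
Proof.
  intros Hc w Hw. apply NNPP; intro Hn. apply Hw, Hc. intros eps He.
  apply NNPP; intro Hn2. apply Hn. exists eps; split; auto.
  intros u Hu Pu. apply Hn2; exists u; auto.
Qed.

Definition segpt (y z : point) (t : R) : point :=
  (fst y + t * (fst z - fst y), snd y + t * (snd z - snd y)).

Lemma segpt_near y z t t' eps :
  Rabs (t - t') * (Rabs (fst z - fst y) + Rabs (snd z - snd y) + 1) < eps ->
  near eps (segpt y z t) (segpt y z t').
Proof.
  intros H. unfold segpt, near; simpl.
  pose proof (Rabs_pos (t - t')). pose proof (Rabs_pos (fst z - fst y)).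
  pose proof (Rabs_pos (snd z - snd y)).
  split.
  - replace (fst y + t' * (fst z - fst y) - (fst y + t * (fst z - fst y)))
      with ((t' - t) * (fst z - fst y)) by ring.
    rewrite Rabs_mult, Rabs_minus_sym; nra.
  - replace (snd y + t' * (snd z - snd y) - (snd y + t * (snd z - snd y)))
      with ((t' - t) * (snd z - snd y)) by ring.
    rewrite Rabs_mult, Rabs_minus_sym; nra.
Qed.

Lemma segpt_0 y z : segpt y z 0 = y.
Proof. destruct y; unfold segpt; simpl; f_equal; ring. Qed.

Lemma segpt_1 y z : segpt y z 1 = z.
Proof. destruct z; unfold segpt; simpl; f_equal; ring. Qed.

(* The boundary point is [segpt y z m] for [m] the supremum of the parameters
   of points of P on the segment. *)
Lemma segment_meets_boundary P y z : is_closed P -> P y -> ~ P z ->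
  exists t, 0 <= t <= 1 /\ boundary P (segpt y z t).
Proof.
  intros Hc Py Pz.
  set (D := Rabs (fst z - fst y) + Rabs (snd z - snd y) + 1).
  assert (HD : 0 < D).
  { unfold D; pose proof (Rabs_pos (fst z - fst y));
      pose proof (Rabs_pos (snd z - snd y)); lra. }
  set (E := fun t => 0 <= t <= 1 /\ P (segpt y z t)).
  destruct (sup_approx E 1) as [m [Hm [Hleast Happ]]].
  - intros t [Ht _]; lra.
  - exists 0; split; [lra | rewrite segpt_0; auto].
  - assert (Hm0 : 0 <= m) by (apply Hm; split; [lra | rewrite segpt_0; auto]).
    assert (Hm1 : m <= 1) by (apply Hleast; intros t [Ht _]; lra).
    assert (Pm : P (segpt y z m)).
    { apply Hc. intros eps He.
      destruct (Happ (eps / D)) as [t [Et Ht]]; [apply Rdiv_lt_0_compat; lra|].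
      exists (segpt y z t); split; [apply Et|].
      apply segpt_near. fold D.
      assert (t <= m) by (apply Hm; auto).
      rewrite Rabs_right by lra.
      apply Rmult_lt_reg_r with (/ D); [apply Rinv_0_lt_compat; lra|].
      rewrite Rmult_assoc, Rinv_r by lra. unfold Rdiv in Ht. lra. }
    assert (Hm1' : m < 1).
    { destruct (Req_dec m 1) as [->|]; [|lra]. rewrite segpt_1 in Pm; contradiction. }
    exists m; split; [lra|]. split.
    + intros eps He; exists (segpt y z m); split; auto; apply near_refl; auto.
    + intros [eps [He Hi]].
      set (h := Rmin ((1 - m) / 2) (eps / (2 * D))).
      assert (Hh1 : h <= (1 - m) / 2) by apply Rmin_l.
      assert (Hh2 : h <= eps / (2 * D)) by apply Rmin_r.
      assert (Hh0 : 0 < h).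
      { unfold h; apply Rmin_glb_lt; [lra|]. apply Rdiv_lt_0_compat; lra. }
      assert (Eh : E (m + h)).
      { split; [lra|]. apply Hi, segpt_near. fold D.
        replace (m - (m + h)) with (- h) by ring. rewrite Rabs_Ropp, Rabs_right by lra.
        assert (h * D <= eps / (2 * D) * D) by (apply Rmult_le_compat_r; lra).
        replace (eps / (2 * D) * D) with (eps / 2) in H by (field; lra). lra. }
      specialize (Hm _ Eh); lra.
Qed.

Definition boundary_locally_axial (P : region) : Prop :=
  forall v, exists eps, 0 < eps /\
    forall x, near eps v x -> boundary P x -> fst x = fst v \/ snd x = snd v.

(* [eps] is the distance from [v] to the nearest line supporting a boundary
   segment that does not pass through [v]. *)
Lemma orthogonal_polygon_boundary_locally_axial P :
  orthogonal_polygon P -> boundary_locally_axial P.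
Proof.
  intros [_ [_ [_ [_ [_ [segs [Hax Hbd]]]]]]] v.
  set (dist := fun r => if Req_EM_T r 0 then 1 else Rabs r).
  assert (dist_pos : forall r, 0 < dist r).
  { intros r; unfold dist; destruct (Req_EM_T r 0); [lra | apply Rabs_pos_lt; auto]. }
  assert (dist_le : forall r, r <> 0 -> dist r <= Rabs r).
  { intros r Hr; unfold dist; destruct (Req_EM_T r 0); [contradiction | lra]. }
  set (f := fun s => Rmin (dist (sx1 s - fst v)) (dist (sy1 s - snd v))).
  destruct (list_min_pos (map f segs)) as [e [He Hl]].
  { intros r Hr; apply in_map_iff in Hr; destruct Hr as [s [<- _]].
    apply Rmin_glb_lt; apply dist_pos. }
  exists e; split; auto. intros x Hnear Hbx.
  apply Hbd in Hbx. destruct Hbx as [s [Hin [[Ho1 Ho2] [Ho3 Ho4]]]].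
  assert (Hes : e <= f s) by (apply Hl, in_map; auto). unfold f in Hes.
  pose proof (Rmin_l (dist (sx1 s - fst v)) (dist (sy1 s - snd v))).
  pose proof (Rmin_r (dist (sx1 s - fst v)) (dist (sy1 s - snd v))).
  destruct Hnear as [Hn1 Hn2].
  destruct (Hax s Hin) as [Hv|Hh].
  - rewrite <- Hv, Rmin_left, Rmax_left in * by lra.
    replace (fst x) with (sx1 s) in * by lra.
    destruct (Req_dec (sx1 s - fst v) 0) as [E|E]; [left; lra|].
    pose proof (dist_le _ E). lra.
  - rewrite <- Hh, Rmin_left, Rmax_left in * by lra.
    replace (snd x) with (sy1 s) in * by lra.
    destruct (Req_dec (sy1 s - snd v) 0) as [E|E]; [right; lra|].
    pose proof (dist_le _ E). lra.
Qed.

Lemma sgn_neq0_bound s w e : 0 < sgn s * w < e -> w <> 0 /\ - e < w < e.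
Proof. destruct s; simpl; intros; (split; [intro Hw; rewrite Hw in *; lra | lra]). Qed.

Lemma convex_comb_in_interval A B t e : 0 < A < e -> 0 < B < e -> 0 <= t <= 1 ->
  0 < (1 - t) * A + t * B < e.
Proof.
  intros HA HB Ht.
  assert (0 <= (1 - t) * A) by (apply Rmult_le_pos; lra).
  assert (0 <= t * B) by (apply Rmult_le_pos; lra).
  assert (0 <= (1 - t) * (e - A)) by (apply Rmult_le_pos; lra).
  assert (0 <= t * (e - B)) by (apply Rmult_le_pos; lra).
  split; nra.
Qed.

Lemma quadrant_mono v e1 e2 sx sy x :
  quadrant v e1 sx sy x -> e1 <= e2 -> quadrant v e2 sx sy x.
Proof. unfold quadrant; intros; lra. Qed.

(* A segment between a point of P and a point outside, inside an open
   quadrant, would cross the boundary off the two axes through [v]. *)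
Lemma quadrant_dichotomy P : is_closed P -> boundary_locally_axial P ->
  forall v, exists eps, 0 < eps /\ forall sx sy,
    (forall x, quadrant v eps sx sy x -> P x) \/
    (forall x, quadrant v eps sx sy x -> ~ P x).
Proof.
  intros Hc Hax v. destruct (Hax v) as [eps [He Hb]]. exists eps; split; auto.
  intros sx sy.
  destruct (classic (exists z, quadrant v eps sx sy z /\ ~ P z)) as [[z [Qz Pz]]|Hn].
  - right. intros x Qx Px.
    destruct (segment_meets_boundary P x z Hc Px Pz) as [t [Ht Hbd]].
    destruct Qx as [Qx1 Qx2]; destruct Qz as [Qz1 Qz2].
    assert (A1 : 0 < sgn sx * (fst (segpt x z t) - fst v) < eps).
    { unfold segpt; simpl.
      replace (sgn sx * (fst x + t * (fst z - fst x) - fst v)) with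
        ((1 - t) * (sgn sx * (fst x - fst v)) + t * (sgn sx * (fst z - fst v))) by ring.
      apply convex_comb_in_interval; auto. }
    assert (A2 : 0 < sgn sy * (snd (segpt x z t) - snd v) < eps).
    { unfold segpt; simpl.
      replace (sgn sy * (snd x + t * (snd z - snd x) - snd v)) with
        ((1 - t) * (sgn sy * (snd x - snd v)) + t * (sgn sy * (snd z - snd v))) by ring.
      apply convex_comb_in_interval; auto. }
    apply sgn_neq0_bound in A1; apply sgn_neq0_bound in A2.
    destruct (Hb (segpt x z t)) as [Hq|Hq]; auto.
    + apply near_intro; lra.
    + apply (proj1 A1); lra.
    + apply (proj1 A2); lra.
  - left. intros x Qx. apply NNPP; intro Px. apply Hn; exists x; auto.
Qed.

Section PlaneSymmetry.

Variable s : point -> point.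
Hypothesis s_invol : forall z, s (s z) = z.
Hypothesis s_near : forall e x y, near e (s x) (s y) <-> near e x y.

Lemma interior_comp (P : region) x : interior (fun z => P (s z)) x <-> interior P (s x).
Proof.
  split; intros [eps [He H]]; exists eps; split; auto.
  - intros y Hy. rewrite <- (s_invol y). apply H, s_near. rewrite s_invol; auto.
  - intros y Hy. apply H, s_near; auto.
Qed.

Lemma closure_comp (P : region) x : closure (fun z => P (s z)) x <-> closure P (s x).
Proof.
  split; intros H eps He; destruct (H eps He) as [y [Py Hy]].
  - exists (s y); split; auto. apply s_near; auto.
  - exists (s y); split; [rewrite s_invol; auto|]. apply s_near; rewrite s_invol; auto.
Qed.

Lemma boundary_comp (P : region) x : boundary (fun z => P (s z)) x <-> boundary P (s x).
Proof. unfold boundary; rewrite closure_comp, interior_comp; tauto. Qed.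

Lemma is_closed_comp (P : region) : is_closed P -> is_closed (fun z => P (s z)).
Proof. intros H x Hx. apply H, closure_comp; auto. Qed.

Lemma closure_interior_comp (P : region) :
  (forall x, P x -> closure (interior P) x) ->
  forall x, P (s x) -> closure (interior (fun z => P (s z))) x.
Proof.
  intros H x Px eps He.
  destruct (proj2 (closure_comp (interior P) x) (H _ Px) eps He) as [y [Hy Hn]].
  exists y; split; auto. apply interior_comp; auto.
Qed.

Hypothesis s_axial : forall x v,
  fst (s x) = fst (s v) \/ snd (s x) = snd (s v) -> fst x = fst v \/ snd x = snd v.

Lemma boundary_locally_axial_comp (P : region) :
  boundary_locally_axial P -> boundary_locally_axial (fun z => P (s z)).
Proof.
  intros H v. destruct (H (s v)) as [eps [He Hb]]. exists eps; split; auto.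
  intros x Hx Hbx. apply s_axial, Hb; [apply s_near | apply boundary_comp]; auto.
Qed.

End PlaneSymmetry.

Definition mirror (z : point) : point := (- fst z, snd z).
Definition swap (z : point) : point := (snd z, fst z).

Lemma mirror_invol z : mirror (mirror z) = z.
Proof. destruct z; unfold mirror; simpl; rewrite Ropp_involutive; auto. Qed.

Lemma swap_invol z : swap (swap z) = z.
Proof. destruct z; reflexivity. Qed.

Lemma mirror_near e x y : near e (mirror x) (mirror y) <-> near e x y.
Proof.
  unfold near, mirror; simpl.
  replace (- fst y - - fst x) with (- (fst y - fst x)) by ring. rewrite Rabs_Ropp. tauto.
Qed.

Lemma swap_near e x y : near e (swap x) (swap y) <-> near e x y.
Proof. unfold near, swap; simpl; tauto. Qed.

Lemma sgn_negb b : sgn (negb b) = - sgn b.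
Proof. destruct b; simpl; ring. Qed.

Lemma quadrant_mirror v e sx sy x :
  quadrant (mirror v) e (negb sx) sy (mirror x) <-> quadrant v e sx sy x.
Proof.
  unfold quadrant, mirror; simpl. rewrite sgn_negb.
  replace (- sgn sx * (- fst x - - fst v)) with (sgn sx * (fst x - fst v)) by ring. tauto.
Qed.

Lemma quadrant_swap v e sx sy x :
  quadrant (swap v) e sy sx (swap x) <-> quadrant v e sx sy x.
Proof. unfold quadrant, swap; simpl; tauto. Qed.

Lemma reflex_vertex_mirror (P : region) v sx sy :
  reflex_vertex (fun z => P (mirror z)) v sx sy -> reflex_vertex P (mirror v) (negb sx) sy.
Proof.
  intros [eps [He [H1 [H2 [H3 H4]]]]]. exists eps; split; auto.
  split; [|split; [|split]]; intros x Hq; rewrite <- (mirror_invol x) in Hq |- *;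
    apply (proj1 (quadrant_mirror _ _ _ _ _)) in Hq; auto.
Qed.

Lemma reflex_vertex_swap (P : region) v sx sy :
  reflex_vertex (fun z => P (swap z)) v sx sy -> reflex_vertex P (swap v) sy sx.
Proof.
  intros [eps [He [H1 [H2 [H3 H4]]]]]. exists eps; split; auto.
  split; [|split; [|split]]; intros x Hq; rewrite <- (swap_invol x) in Hq |- *;
    apply (proj1 (quadrant_swap _ _ _ _ _)) in Hq; auto.
Qed.

Lemma ray_cut_mirror (P : region) v dx dy x :
  ray_cut (fun z => P (mirror z)) v dx dy x -> ray_cut P (mirror v) (- dx) dy (mirror x).
Proof.
  intros [t [Ht [Hi ->]]]. exists t; split; auto; split.
  - intros r Hr. specialize (Hi r Hr).
    apply (interior_comp mirror mirror_invol mirror_near) in Hi.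
    replace (fst (mirror v) + r * - dx, snd (mirror v) + r * dy) with
      (mirror (fst v + r * dx, snd v + r * dy)); auto.
    unfold mirror; simpl; f_equal; ring.
  - unfold mirror; simpl; f_equal; ring.
Qed.

Lemma ray_cut_swap (P : region) v dx dy x :
  ray_cut (fun z => P (swap z)) v dx dy x -> ray_cut P (swap v) dy dx (swap x).
Proof.
  intros [t [Ht [Hi ->]]]. exists t; split; auto; split; [|reflexivity].
  intros r Hr. specialize (Hi r Hr).
  apply (interior_comp swap swap_invol swap_near) in Hi; exact Hi.
Qed.

Lemma cuts_mirror (P : region) x : cuts (fun z => P (mirror z)) x -> cuts P (mirror x).
Proof.
  intros [v [sx [sy [Hr Hc]]]]. exists (mirror v), (negb sx), sy.
  split; [apply reflex_vertex_mirror; auto|].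
  rewrite sgn_negb, Ropp_involutive.
  destruct Hc as [Hc|Hc]; apply ray_cut_mirror in Hc;
    [left; rewrite <- Ropp_involutive at 1 | right; rewrite Ropp_0 in Hc]; auto.
Qed.

Lemma cuts_swap (P : region) x : cuts (fun z => P (swap z)) x -> cuts P (swap x).
Proof.
  intros [v [sx [sy [Hr Hc]]]]; exists (swap v), sy, sx.
  split; [apply reflex_vertex_swap; auto|].
  destruct Hc as [Hc|Hc]; apply ray_cut_swap in Hc; auto.
Qed.

(* What the argument uses about a polygon and one of its pixels; unlike
   [orthogonal_polygon] and [pixel], it is preserved by [mirror] and [swap]. *)
Record cut_free_rect (P : region) (a b c d : R) : Prop := {
  cfr_width : a < b;
  cfr_height : c < d;
  cfr_closed : is_closed P;
  cfr_axial : boundary_locally_axial P;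
  cfr_regular : forall x, P x -> closure (interior P) x;
  cfr_rect_in : forall x, closed_rect a b c d x -> P x;
  cfr_no_cut : forall x, open_rect a b c d x -> ~ cuts P x }.

Lemma pixel_cut_free_rect P a b c d :
  orthogonal_polygon P -> pixel P a b c d -> cut_free_rect P a b c d.
Proof.
  intros HP [Hab [Hcd [Hin [Hcut _]]]].
  pose proof HP as [Hcl [_ [_ [_ [Hreg _]]]]].
  split; auto. apply orthogonal_polygon_boundary_locally_axial; auto.
Qed.

Lemma cut_free_rect_mirror P a b c d :
  cut_free_rect P a b c d -> cut_free_rect (fun z => P (mirror z)) (- b) (- a) c d.
Proof.
  intros [Hab Hcd Hcl Hax Hreg Hin Hcut]; split.
  - lra.
  - lra.
  - apply (is_closed_comp mirror mirror_invol mirror_near); auto.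
  - apply (boundary_locally_axial_comp mirror mirror_invol mirror_near); auto.
    intros x v; unfold mirror; simpl; intros [H|H]; [left|right]; lra.
  - apply (closure_interior_comp mirror mirror_invol mirror_near); auto.
  - intros x Hx; apply Hin. unfold closed_rect, mirror in *; simpl; lra.
  - intros x Hx Hc. apply (Hcut (mirror x)); [|apply cuts_mirror; auto].
    unfold open_rect, mirror in *; simpl; lra.
Qed.

Lemma cut_free_rect_swap P a b c d :
  cut_free_rect P a b c d -> cut_free_rect (fun z => P (swap z)) c d a b.
Proof.
  intros [Hab Hcd Hcl Hax Hreg Hin Hcut]; split; auto.
  - apply (is_closed_comp swap swap_invol swap_near); auto.
  - apply (boundary_locally_axial_comp swap swap_invol swap_near); auto.
    intros x v; unfold swap; simpl; tauto.
  - apply (closure_interior_comp swap swap_invol swap_near); auto.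
  - intros x Hx; apply Hin. unfold closed_rect, swap in *; simpl; lra.
  - intros x Hx Hc. apply (Hcut (swap x)); [|apply cuts_swap; auto].
    unfold open_rect, swap in *; simpl; lra.
Qed.

Lemma open_rect_interior (P : region) a b c d z :
  (forall x, closed_rect a b c d x -> P x) -> open_rect a b c d z -> interior P z.
Proof.
  intros Hin [Hz1 Hz2].
  destruct (list_min_pos [fst z - a; b - fst z; snd z - c; d - snd z]) as [r [Hr Hle]].
  { intros r Hr; simpl in Hr; repeat destruct Hr as [<-|Hr]; try lra; destruct Hr. }
  assert (r <= fst z - a) by (apply Hle; simpl; auto 10).
  assert (r <= b - fst z) by (apply Hle; simpl; auto 10).
  assert (r <= snd z - c) by (apply Hle; simpl; auto 10).
  assert (r <= d - snd z) by (apply Hle; simpl; auto 10).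
  exists r; split; auto. intros y Hy. apply near_elim in Hy.
  apply Hin; unfold closed_rect; lra.
Qed.

Definition gap (P : region) (lo hi x y : R) : Prop := lo <= y <= hi /\ ~ P (x, y).

Definition gaps_below (P : region) (lo hi xs dl u : R) : Prop :=
  forall x y, gap P lo hi x y -> xs - dl < x < xs + dl -> y <= u.

(* Suppose the gaps of the strip [gy, c] below the pixel cluster on the
   column [x = xs], which itself lies in P, and let [yT] be the highest height
   at which they do.  Then [(xs, yT)] is a reflex vertex of P whose missing
   quadrant points down, so its upward cut enters the open pixel. *)
Section GapCluster.

Variables (P : region) (a b c d xs gy yT eps : R).
Hypothesis HG : cut_free_rect P a b c d.
Hypothesis Hxs : a < xs < b.
Hypothesis Hcol : forall y, gy <= y <= c -> P (xs, y).
Hypothesis HyT_ge : gy <= yT.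
Hypothesis HyT_low : forall u dl, 0 < dl -> gaps_below P gy c xs dl u -> yT <= u.
Hypothesis HyT_approx : forall eta, 0 < eta ->
  exists u dl, 0 < dl /\ gaps_below P gy c xs dl u /\ u < yT + eta.
Hypothesis Heps : 0 < eps.
Hypothesis Heps_a : eps <= xs - a.
Hypothesis Heps_b : eps <= b - xs.
Hypothesis Heps_d : eps <= d - c.
Hypothesis Hquad : forall sx sy,
  (forall x, quadrant (xs, yT) eps sx sy x -> P x) \/
  (forall x, quadrant (xs, yT) eps sx sy x -> ~ P x).

Lemma gaps_reach_above w dl : w < yT -> 0 < dl ->
  exists x y, gap P gy c x y /\ xs - dl < x < xs + dl /\ w < y.
Proof.
  intros Hw Hdl. apply NNPP; intro Hn.
  enough (yT <= w) by lra.
  apply (HyT_low w dl Hdl). intros x y Hgap Hx.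
  apply Rnot_lt_le; intro Hy. apply Hn; exists x, y; auto.
Qed.

Lemma top_cluster_le : yT <= c.
Proof. apply (HyT_low c 1); [lra|]. intros x y [Hy _] _; lra. Qed.

Lemma upper_quadrants_in sx x : quadrant (xs, yT) eps sx true x -> P x.
Proof.
  intros Hx. destruct (Hquad sx true) as [Hin|Hout]; [auto|exfalso].
  pose proof top_cluster_le.
  destruct (Rlt_le_dec yT c) as [HyTc|HyTc].
  - destruct (half_Rmin_bounds eps (c - yT) Heps ltac:(lra)) as [Hh0 [Hh1 Hh2]].
    set (h := Rmin eps (c - yT) / 2) in *.
    destruct (HyT_approx h Hh0) as [u [dl [Hdl [Hu Hult]]]].
    destruct (half_Rmin_bounds dl eps Hdl Heps) as [Hk0 [Hk1 Hk2]].
    set (k := Rmin dl eps / 2) in *.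
    assert (Hgap : gap P gy c (xs + sgn sx * k) (yT + h)).
    { split; [lra|]. apply Hout. unfold quadrant; simpl. destruct sx; simpl; lra. }
    pose proof (Hu _ _ Hgap ltac:(destruct sx; simpl; lra)). lra.
  - apply (Hout (xs + sgn sx * (eps / 2), yT + eps / 2)).
    + unfold quadrant; simpl; destruct sx; simpl; lra.
    + apply (cfr_rect_in _ _ _ _ _ HG); unfold closed_rect; simpl; destruct sx; simpl; lra.
Qed.

Lemma gap_below_top : exists sx xq yq, gap P gy c xq yq /\
  0 < sgn sx * (xq - xs) < eps /\ yT - eps < yq < yT.
Proof.
  destruct (HyT_approx eps Heps) as [u [dl [Hdl [Hu Hult]]]].
  destruct (half_Rmin_bounds dl eps Hdl Heps) as [Hm0 [Hm1 Hm2]].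
  destruct (gaps_reach_above (yT - eps) (Rmin dl eps / 2) ltac:(lra) Hm0)
    as [xq [yq [Hq [Hxq Hyq]]]].
  pose proof (Hu _ _ Hq ltac:(lra)) as Hyqu.
  assert (Hxqs : xq <> xs) by (intros ->; destruct Hq as [Hq1 Hq2]; apply Hq2, Hcol; auto).
  assert (Hsx : exists sx, 0 < sgn sx * (xq - xs) < eps).
  { destruct (Rtotal_order xq xs) as [Hlt|[Heq|Hgt]];
      [exists false | contradiction | exists true]; simpl; lra. }
  destruct Hsx as [sx Hsx]. exists sx, xq, yq.
  split; [auto | split; [auto | split; [lra|]]].
  destruct (Rlt_le_dec yq yT) as [|Hge]; auto. exfalso.
  destruct Hq as [_ Hq].
  destruct (Rle_lt_or_eq_dec _ _ Hge) as [Hgt|Heq].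
  - apply Hq, (upper_quadrants_in sx); unfold quadrant; simpl; lra.
  - destruct (closed_compl_open P (cfr_closed _ _ _ _ _ HG) _ Hq) as [r [Hr Hn]].
    destruct (half_Rmin_bounds r eps Hr Heps) as [Hr0 [Hr1 Hr2]].
    apply (Hn (xq, yT + Rmin r eps / 2)).
    + apply near_intro; simpl; lra.
    + apply (upper_quadrants_in sx); unfold quadrant; simpl; lra.
Qed.

(* Otherwise the column below [(xs, yT)] would be a whisker of P: its points
   would not be limits of interior points. *)
Lemma inner_lower_quadrant_in sx : gy < yT ->
  (forall x, quadrant (xs, yT) eps sx false x -> ~ P x) ->
  forall x, quadrant (xs, yT) eps (negb sx) false x -> P x.
Proof.
  intros HgyT Hout_sx. pose proof top_cluster_le.
  destruct (Hquad (negb sx) false) as [Hin|Hout]; auto. exfalso.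
  destruct (half_Rmin_bounds eps (yT - gy) Heps ltac:(lra)) as [Hs0 [Hs1 Hs2]].
  set (s := Rmin eps (yT - gy) / 2) in *.
  assert (Pw : P (xs, yT - s)) by (apply Hcol; lra).
  destruct (cfr_regular _ _ _ _ _ HG _ Pw (s / 2) ltac:(lra)) as [[ux uy] [Hui Hun]].
  apply near_elim in Hun; simpl in Hun.
  destruct Hui as [r [Hr Hri]].
  assert (Pu : P (ux, uy)) by (apply Hri, near_refl; auto).
  destruct (Rtotal_order (sgn sx * (ux - xs)) 0) as [Hlt|[Heq|Hgt]].
  - apply (Hout (ux, uy)); auto. unfold quadrant; simpl. rewrite sgn_negb.
    destruct sx; simpl in *; lra.
  - destruct (half_Rmin_bounds r s Hr Hs0) as [Hq0 [Hq1 Hq2]].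
    apply (Hout_sx (ux + sgn sx * (Rmin r s / 2), uy)).
    + unfold quadrant; simpl. destruct sx; simpl in *; lra.
    + apply Hri. apply near_intro; simpl; destruct sx; simpl in *; lra.
  - apply (Hout_sx (ux, uy)); auto. unfold quadrant; simpl. destruct sx; simpl in *; lra.
Qed.

Lemma column_above_top_interior y : yT < y < (c + d) / 2 -> interior P (xs, y).
Proof.
  intros Hy.
  pose proof (cfr_height _ _ _ _ _ HG).
  destruct (Rlt_le_dec c y) as [Hyc|Hyc].
  { apply (open_rect_interior P a b c d); [apply HG | split; simpl; lra]. }
  destruct (HyT_approx (y - yT) ltac:(lra)) as [u [dl [Hdl [Hu Hult]]]].
  assert (yT <= u) by (apply (HyT_low u dl); auto).
  destruct (list_min_pos [dl; y - u; xs - a; b - xs; d - c]) as [r [Hr Hle]].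
  { intros r Hr; simpl in Hr; repeat destruct Hr as [<-|Hr]; try lra; destruct Hr. }
  assert (r <= dl) by (apply Hle; simpl; auto 10).
  assert (r <= y - u) by (apply Hle; simpl; auto 10).
  assert (r <= xs - a) by (apply Hle; simpl; auto 10).
  assert (r <= b - xs) by (apply Hle; simpl; auto 10).
  assert (r <= d - c) by (apply Hle; simpl; auto 10).
  exists r; split; auto. intros [zx zy] Hz. apply near_elim in Hz; simpl in Hz.
  apply NNPP; intro Hn. destruct (Rlt_le_dec c zy).
  - apply Hn, (cfr_rect_in _ _ _ _ _ HG); unfold closed_rect; simpl; lra.
  - assert (Hgap : gap P gy c zx zy) by (split; [lra | auto]).
    pose proof (Hu _ _ Hgap ltac:(lra)). lra.
Qed.

Lemma gaps_do_not_cluster : False.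
Proof.
  destruct gap_below_top as [sx [xq [yq [Hq [Hsx Hyq]]]]].
  assert (HgyT : gy < yT) by (destruct Hq; lra).
  assert (Hout : forall x, quadrant (xs, yT) eps sx false x -> ~ P x).
  { destruct (Hquad sx false) as [Hin|Hout]; auto. exfalso.
    destruct Hq as [_ Hq]. apply Hq, Hin. unfold quadrant; simpl; lra. }
  assert (Hreflex : reflex_vertex P (xs, yT) sx false).
  { exists eps; repeat split; auto.
    - apply inner_lower_quadrant_in; auto.
    - apply (upper_quadrants_in sx).
    - apply (upper_quadrants_in (negb sx)). }
  pose proof (cfr_height _ _ _ _ _ HG). pose proof top_cluster_le.
  set (t := (c + d) / 2 - yT).
  apply (cfr_no_cut _ _ _ _ _ HG (xs + t * 0, yT + t * - sgn false)).
  - unfold open_rect, t; simpl; lra.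
  - exists (xs, yT), sx, false. split; auto. right.
    exists t. split; [unfold t; lra | split; [|reflexivity]].
    intros r Hr; simpl.
    replace (xs + r * 0) with xs by ring.
    replace (yT + r * - -1) with (yT + r) by ring.
    apply column_above_top_interior; auto. unfold t in Hr; lra.
Qed.

End GapCluster.

Lemma column_thickens P a b c d xs gy : cut_free_rect P a b c d ->
  a < xs < b -> (forall y, gy <= y <= c -> P (xs, y)) ->
  exists dl, 0 < dl /\ forall x y, xs - dl < x < xs + dl -> gy <= y <= c -> P (x, y).
Proof.
  intros HG Hxs Hcol. apply NNPP; intro Hthin.
  assert (Hacc : forall dl, 0 < dl -> exists x y, gap P gy c x y /\ xs - dl < x < xs + dl).
  { intros dl Hdl. apply NNPP; intro Hn. apply Hthin. exists dl; split; auto.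
    intros x y Hx Hy. apply NNPP; intro Hp. apply Hn. exists x, y; split; [split|]; auto. }
  destruct (inf_approx (fun u => exists dl, 0 < dl /\ gaps_below P gy c xs dl u) gy)
    as [yT [Hlow [HyT_ge Happ]]].
  { intros u [dl [Hdl Hu]]. destruct (Hacc dl Hdl) as [x [y [Hgap Hx]]].
    pose proof (Hu _ _ Hgap Hx). destruct Hgap; lra. }
  { exists c, 1; split; [lra|]. intros x y [Hy _] _; lra. }
  destruct (quadrant_dichotomy P (cfr_closed _ _ _ _ _ HG) (cfr_axial _ _ _ _ _ HG) (xs, yT))
    as [eps0 [Heps0 Hquad]].
  pose proof (cfr_height _ _ _ _ _ HG).
  destruct (list_min_pos [eps0; xs - a; b - xs; d - c]) as [eps [Heps Hle]].
  { intros r Hr; simpl in Hr; repeat destruct Hr as [<-|Hr]; try lra; destruct Hr. }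
  assert (Heps_le : eps <= eps0) by (apply Hle; simpl; auto).
  apply (gaps_do_not_cluster P a b c d xs gy yT eps); auto.
  - intros u dl Hdl Hu. apply Hlow; exists dl; auto.
  - intros eta Heta. destruct (Happ eta Heta) as [u [[dl [Hdl Hu]] Hlt]]. exists u, dl; auto.
  - apply Hle; simpl; auto 10.
  - apply Hle; simpl; auto 10.
  - apply Hle; simpl; auto 10.
  - intros sx sy. destruct (Hquad sx sy) as [Hin|Hout]; [left|right];
      intros x Hx; [apply Hin | apply Hout]; eapply quadrant_mono; eauto.
Qed.

(* Sweep to the right: the supremum of the widths already known to lie in P is
   attained because P is closed, and cannot stop short because columns thicken. *)
Lemma column_sweep_right P a b c d gy px :
  cut_free_rect P a b c d -> a < px < b ->
  (forall y, gy <= y <= c -> P (px, y)) ->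
  forall z, px <= fst z < b -> gy <= snd z <= c -> P z.
Proof.
  intros HG Hpx Hcol [x1 y0] Hx1 Hy0; simpl in *.
  set (E := fun x => px <= x <= x1 /\
              forall x' y, px <= x' <= x -> gy <= y <= c -> P (x', y)).
  assert (Epx : E px).
  { split; [lra|]. intros x' y Hx' Hy. replace x' with px by lra. auto. }
  destruct (sup_approx E x1) as [m [Hm [Hleast Happ]]].
  { intros t [Ht _]; lra. }
  { exists px; auto. }
  assert (Hpm : px <= m) by (apply Hm; auto).
  assert (Hm1 : m <= x1) by (apply Hleast; intros t [Ht _]; lra).
  assert (Em : forall x' y, px <= x' <= m -> gy <= y <= c -> P (x', y)).
  { intros x' y Hx' Hy. destruct (Rle_lt_or_eq_dec _ _ (proj2 Hx')) as [Hlt| ->].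
    - destruct (Happ (m - x') ltac:(lra)) as [t [[Ht HPt] Hlt2]]. apply HPt; lra.
    - apply (cfr_closed _ _ _ _ _ HG). intros eps He.
      destruct (Happ eps He) as [t [[Ht HPt] Hlt2]].
      assert (t <= m) by (apply Hm; split; auto).
      exists (t, y); split; [apply HPt; lra|]. apply near_intro; simpl; lra. }
  destruct (Rlt_le_dec m x1) as [Hlt|Hge]; [exfalso | apply Em; lra].
  destruct (column_thickens P a b c d m gy HG ltac:(lra)
              ltac:(intros y Hy; apply Em; auto; lra)) as [dl [Hdl Hthick]].
  destruct (half_Rmin_bounds dl (x1 - m) Hdl ltac:(lra)) as [Hk0 [Hk1 Hk2]].
  assert (Emk : E (m + Rmin dl (x1 - m) / 2)).
  { split; [lra|]. intros x' y Hx' Hy. destruct (Rle_lt_dec x' m).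
    - apply Em; lra.
    - apply Hthick; lra. }
  specialize (Hm _ Emk); lra.
Qed.

Lemma column_sweep P a b c d xs gy py zx zy : cut_free_rect P a b c d ->
  a < xs < b -> c < py < d -> xs <= zx < b -> (gy <= zy <= py \/ py <= zy <= gy) ->
  (forall y, (gy <= y <= py \/ py <= y <= gy) -> P (xs, y)) -> P (zx, zy).
Proof.
  intros HG Hxs Hpy Hzx Hzy Hcol.
  destruct (Rlt_le_dec zy c) as [Hc1|Hc1].
  { apply (column_sweep_right P a b c d gy xs HG Hxs); simpl; try lra.
    intros y Hy; apply Hcol; lra. }
  destruct (Rle_lt_dec zy d) as [Hd1|Hd1].
  { apply (cfr_rect_in _ _ _ _ _ HG); unfold closed_rect; simpl; lra. }
  pose proof (cut_free_rect_swap _ _ _ _ _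
    (cut_free_rect_mirror _ _ _ _ _ (cut_free_rect_swap P a b c d HG))) as HG'.
  pose proof (column_sweep_right _ _ _ _ _ (- gy) xs HG' Hxs) as Hsweep.
  unfold swap, mirror in Hsweep; simpl in Hsweep.
  rewrite <- (Ropp_involutive zy).
  apply (Hsweep ltac:(intros y Hy; apply Hcol; lra) (zx, - zy)); simpl; lra.
Qed.

Lemma guards_shift_x P a b c d gx gy px py mx : cut_free_rect P a b c d ->
  a < px < b -> c < py < d -> a < mx < b ->
  subset (Rgp (gx, gy) (px, py)) P -> subset (Rgp (gx, gy) (mx, py)) P.
Proof.
  intros HG Hpx Hpy Hmx Hsub [zx zy] [Hzx Hzy]; simpl in Hzx, Hzy.
  rewrite Rmin_Rmax_between in Hzx, Hzy.
  assert (Hcol : forall x y, Rmin gx px <= x <= Rmax gx px ->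
                   (gy <= y <= py \/ py <= y <= gy) -> P (x, y)).
  { intros x y Hx Hy. apply Hsub. split; simpl; [auto | apply Rmin_Rmax_between; auto]. }
  pose proof (Rmin_l gx px). pose proof (Rmin_r gx px).
  pose proof (Rmax_l gx px). pose proof (Rmax_r gx px).
  destruct (Rlt_le_dec (Rmax gx px) zx) as [Hright|Hle].
  { apply (column_sweep P a b c d (Rmax gx px) gy py); auto;
      try (destruct Hzx; lra).
    intros y Hy; apply Hcol; auto; lra. }
  destruct (Rlt_le_dec zx (Rmin gx px)) as [Hleft|Hge]; [|apply Hcol; auto].
  rewrite <- (Ropp_involutive zx).
  apply (column_sweep (fun z => P (mirror z)) (- b) (- a) c d (- Rmin gx px) gy py);
    auto; try (apply cut_free_rect_mirror; auto); try (destruct Hzx; lra).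
  intros y Hy; unfold mirror; simpl; rewrite Ropp_involutive; apply Hcol; auto; lra.
Qed.

Lemma guards_shift_y P a b c d g px py my : cut_free_rect P a b c d ->
  a < px < b -> c < py < d -> c < my < d ->
  subset (Rgp g (px, py)) P -> subset (Rgp g (px, my)) P.
Proof.
  intros HG Hpx Hpy Hmy Hsub [z1 z2] Hz. destruct g as [gx gy].
  apply (guards_shift_x (fun z => P (swap z)) c d a b gy gx py px my
           (cut_free_rect_swap _ _ _ _ _ HG) Hpy Hpx Hmy) with (x := (z2, z1)).
  - intros [w1 w2] Hw; apply Hsub. unfold Rgp, closed_rect in *; simpl in *; tauto.
  - unfold Rgp, closed_rect in *; simpl in *; tauto.
Qed.

Lemma guards_open_pixel P a b c d g p q : cut_free_rect P a b c d ->
  open_rect a b c d p -> open_rect a b c d q ->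
  subset (Rgp g p) P -> subset (Rgp g q) P.
Proof.
  intros HG [Hp1 Hp2] [Hq1 Hq2] Hsub.
  destruct p as [p1 p2], q as [q1 q2], g as [gx gy]; simpl in *.
  apply (guards_shift_y P a b c d (gx, gy) q1 p2 q2 HG Hq1 Hp2 Hq2).
  apply (guards_shift_x P a b c d gx gy p1 p2 q1 HG Hp1 Hp2 Hq1 Hsub).
Qed.

Lemma open_interval_approx a b u e : a < b -> a <= u <= b -> 0 < e ->
  exists u', a < u' < b /\ Rabs (u' - u) < e.
Proof.
  intros Hab Hu He.
  destruct (half_Rmin_bounds e (b - a) He ltac:(lra)) as [H0 [H1 H2]].
  set (h := Rmin e (b - a) / 2) in *.
  destruct (Req_dec u a); [exists (a + h) | destruct (Req_dec u b);
    [exists (b - h) | exists u]]; split; try lra; apply Rabs_def1; lra.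
Qed.

Lemma between_perturb g u w w' e : Rmin g w <= u <= Rmax g w -> Rabs (w' - w) < e ->
  exists u', Rmin g w' <= u' <= Rmax g w' /\ Rabs (u' - u) < e.
Proof.
  intros Hu Hw. apply Rabs_def2 in Hw. rewrite Rmin_Rmax_between in Hu.
  destruct (classic (Rmin g w' <= u <= Rmax g w')) as [Hin|Hout].
  - exists u; split; auto. apply Rabs_def1; lra.
  - exists w'. rewrite !Rmin_Rmax_between in *. split.
    + destruct (Rle_dec g w'); [left|right]; lra.
    + apply Rabs_def1; destruct Hu, (Rle_dec g w');
        try (exfalso; apply Hout; (left; lra) || (right; lra)); lra.
Qed.

Lemma guards_closed_pixel P a b c d g p q : cut_free_rect P a b c d ->
  open_rect a b c d p -> closed_rect a b c d q ->
  subset (Rgp g p) P -> subset (Rgp g q) P.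
Proof.
  intros HG Hp [Hq1 Hq2] Hsub z [Hz1 Hz2].
  apply (cfr_closed _ _ _ _ _ HG). intros eps He.
  destruct (open_interval_approx a b (fst q) eps (cfr_width _ _ _ _ _ HG) Hq1 He)
    as [q1 [Hq1' Hd1]].
  destruct (open_interval_approx c d (snd q) eps (cfr_height _ _ _ _ _ HG) Hq2 He)
    as [q2 [Hq2' Hd2]].
  destruct (between_perturb _ _ _ q1 eps Hz1 Hd1) as [u1 [Hu1 Hn1]].
  destruct (between_perturb _ _ _ q2 eps Hz2 Hd2) as [u2 [Hu2 Hn2]].
  exists (u1, u2); split; [|split; auto].
  apply (guards_open_pixel P a b c d g p (q1, q2) HG Hp (conj Hq1' Hq2') Hsub).
  split; auto.
Qed.

Lemma not_degenerate_of_fat_superset (P : region) a b c d a' b' c' d' :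
  a' < b' -> c' < d' -> a' <= a -> b <= b' -> c' <= c -> d <= d' ->
  subset (closed_rect a' b' c' d') P -> ~ degenerate P a b c d.
Proof.
  intros Hab' Hcd' Ha Hb Hc Hd Hsub [Harea Hmax]. apply Hmax.
  exists a', b', c', d'; split; [auto | split; [auto | split; [|split; auto]]].
  { intros z [Hz1 Hz2]; split; lra. }
  apply Rmult_integral in Harea. destruct Harea as [Hw|Hh].
  - destruct (Req_dec a' a) as [->|Ha'].
    + exists (b', c'); split; [split; simpl; lra | intros [Hz _]; simpl in Hz; lra].
    + exists (a', c'); split; [split; simpl; lra | intros [Hz _]; simpl in Hz; lra].
  - destruct (Req_dec c' c) as [->|Hc'].
    + exists (a', d'); split; [split; simpl; lra | intros [_ Hz]; simpl in Hz; lra].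
    + exists (a', c'); split; [split; simpl; lra | intros [_ Hz]; simpl in Hz; lra].
Qed.

Lemma exists_wider_interval a b g w : a < b -> a <= w <= b ->
  exists q, a <= q <= b /\ q <> g /\ Rmin g q <= Rmin g w /\ Rmax g w <= Rmax g q.
Proof.
  intros Hab Hw. destruct (Req_dec w g) as [->|Hwg]; [|exists w; split; auto; lra].
  destruct (Req_dec a g) as [->|Hag]; [exists b | exists a];
    (split; [lra | split; [lra |]]); unfold Rmin, Rmax; repeat destruct (Rle_dec _ _); lra.
Qed.

Lemma Rmin_lt_Rmax u v : u <> v -> Rmin u v < Rmax u v.
Proof. intros H; unfold Rmin, Rmax; destruct (Rle_dec u v); destruct (Rtotal_order u v) as [?|[?|?]]; lra. Qed.

Theorem lemmaA1 :
  forall (cv : convention) (P : region), orthogonal_polygon P ->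
  forall a b c d : R, pixel P a b c d ->
  forall p p' : point, open_rect a b c d p -> closed_rect a b c d p' ->
  subset (guard_set cv P p) (guard_set cv P p').
Proof.
  intros cv P HP a b c d Hpix p p' Hp Hp' g [Pg Hguard].
  pose proof (pixel_cut_free_rect P a b c d HP Hpix) as HG.
  split; [auto|]. destruct cv; simpl in Hguard |- *.
  - apply (guards_closed_pixel P a b c d g p p' HG Hp Hp' Hguard).
  - destruct Hguard as [Hsub _].
    split; [apply (guards_closed_pixel P a b c d g p p' HG Hp Hp' Hsub)|].
    destruct Hp' as [Hp1 Hp2].
    destruct (exists_wider_interval a b (fst g) (fst p') (cfr_width _ _ _ _ _ HG) Hp1)
      as [q1 [Hq1 [Hn1 [Hmin1 Hmax1]]]].
    destruct (exists_wider_interval c d (snd g) (snd p') (cfr_height _ _ _ _ _ HG) Hp2)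
      as [q2 [Hq2 [Hn2 [Hmin2 Hmax2]]]].
    apply (not_degenerate_of_fat_superset P _ _ _ _
             (Rmin (fst g) q1) (Rmax (fst g) q1) (Rmin (snd g) q2) (Rmax (snd g) q2));
      try apply Rmin_lt_Rmax; auto.
    apply (guards_closed_pixel P a b c d g p (q1, q2) HG Hp (conj Hq1 Hq2) Hsub).
Qed.
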